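(* Let $f:\mathbb{R}^N\to\mathbb{R}$ be differentiable, let $w^t\in\Delta^N$ have all entries positive, and suppose $M_t:=\max_i(\Pi^t\nabla f^t)_i>0$; set $\eta_{t,\max}=1/M_t$. Let $\eta_t=\gamma_t\eta_{t,\max}$ with $\gamma_t\in(0,1)$, and let $$w^{t+1}=w^t-\eta_t\,w^t\odot\Pi^t\nabla f^t.$$ Then for any $u\in\Delta^N$, $$D(u\,|\,w^{t+1})-D(u\,|\,w^t)\le\eta_t\,u\cdot(\Pi^t\nabla f^t)+C_{\gamma_t}\eta_t^2\,u\cdot(\Pi^t\nabla f^t)^2,$$ where $C_{\gamma}=\gamma^{-2}\log\!\big(e^{-\gamma}/(1-\gamma)\big)$.
   Context: $\Delta^N=\{w\in\mathbb{R}^N : \sum_i w_i=1,\ w_i\ge 0\}$. Write $\nabla f^t=\nabla f(w^t)$ and $(\Pi^t\nabla f^t)_i=\nabla_i f(w^t)-w^t\cdot\nabla f(w^t)$. $\odot$ denotes componentwise multiplication; $(\Pi^t\nabla f^t)^2$ is the componentwise square. The relative entropy is $D(u\,|\,w)=\sum_{i:\,u_i\ne0}u_i\log(u_i/w_i)$. *)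

From HB Require Import structures.
From mathcomp Require Import all_boot all_order all_algebra.
From mathcomp Require Import all_classical all_reals all_analysis.
Set Implicit Arguments. Unset Strict Implicit. Unset Printing Implicit Defensive.
Import Order.TTheory GRing.Theory Num.Theory.
Import numFieldNormedType.Exports.
Local Open Scope ring_scope.

Definition simplex (R : realType) (N : nat) (w : 'rV[R]_N) : Prop :=
  (\sum_(i < N) w ord0 i = 1) /\ (forall i, 0 <= w ord0 i).

Definition grad (R : realType) (N : nat) (f : 'rV[R]_N -> R) (w : 'rV[R]_N)
  : 'rV[R]_N := \row_i derive f w (delta_mx ord0 i).

Definition projgrad (R : realType) (N : nat) (f : 'rV[R]_N -> R) (w : 'rV[R]_N)
  : 'rV[R]_N :=
  \row_i (grad f w ord0 i - \sum_(j < N) w ord0 j * grad f w ord0 j).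

Definition relent (R : realType) (N : nat) (u w : 'rV[R]_N) : R :=
  \sum_(i < N | u ord0 i != 0) u ord0 i * ln (u ord0 i / w ord0 i).

Definition Cgamma (R : realType) (g : R) : R :=
  g ^- 2 * ln (expR (- g) / (1 - g)).

From mathcomp Require Import all_boot all_order all_algebra.
From mathcomp Require Import all_classical all_reals all_analysis.
From mathcomp Require Import ring lra.
Set Implicit Arguments. Unset Strict Implicit. Unset Printing Implicit Defensive.
Import Order.TTheory GRing.Theory Num.Theory.
Import numFieldNormedType.Exports.
Local Open Scope ring_scope.

(* The step multiplies each weight w_i by 1 - x_i with x_i = eta (Pi grad f)_i <= gamma, so
   D(u | w') - D(u | w) = sum_i u_i (- ln (1 - x_i)).  It remains to bound the scalar
   function -ln(1 - x) by x + C_gamma x^2 for x <= gamma.  Its second-order remainder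
   h(x) = -ln(1 - x) - x satisfies h(x) <= x^2/2 for x <= 0 and h(x) / x^2 is nondecreasing
   on (0, 1); C_gamma = h(gamma) / gamma^2 >= 1/2 makes the bound tight at x = gamma.
   The derivative of h(x) / x^2 has the sign of x^2 - 2 (1 - x) h(x), which vanishes at 0
   and has derivative 2 h(x) >= 0. *)

Section ln1B_remainder.
Variable R : realType.

Lemma is_derive_ge0_le (f df : R -> R) (a b x y : R) :
  (forall z, a < z < b -> is_derive z 1 f (df z)) ->
  (forall z, a < z < b -> 0 <= df z) ->
  a < x -> x <= y -> y < b -> f x <= f y.
Proof.
move=> f_df df_ge0 a_x le_xy y_b.
have f_derivable z : z \in `]a, b[ -> derivable f z 1.
  by rewrite in_itv /= => /f_df [].
apply: (@ger0_derive1_le_oo _ f a b) => //.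
- move=> z z_ab; rewrite derive1E.
  move: z_ab; rewrite in_itv /= => z_ab.
  by rewrite (@derive_val _ _ _ _ _ _ _ (f_df z z_ab)); exact: df_ge0.
- move=> z /set_mem /f_derivable /derivable1_diffP.
  exact: differentiable_continuous.
- by rewrite in_itv /= a_x (le_lt_trans le_xy y_b).
- by rewrite in_itv /= y_b (lt_le_trans a_x le_xy).
Qed.

Lemma is_derive_ln1B (x : R) : x < 1 ->
  is_derive x 1 (fun y : R => ln (1 - y)) (- (1 - x)^-1).
Proof.
move=> x_lt1.
have : is_derive x 1 (@ln R \o (cst 1 - id)) ((1 - x)^-1 * (0 - 1)).
  by apply: is_derive1_comp; apply: is_derive1_ln; rewrite /= subr_gt0.
by rewrite sub0r mulrN1.
Qed.

Definition ln1B_rem (x : R) : R := - ln (1 - x) - x.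

Lemma ln1B_rem0 : ln1B_rem 0 = 0.
Proof. by rewrite /ln1B_rem !subr0 ln1 oppr0. Qed.

Lemma is_derive_ln1B_rem (x : R) : x < 1 ->
  is_derive x 1 ln1B_rem (x / (1 - x)).
Proof.
move=> x_lt1; have d_ln := is_derive_ln1B x_lt1; rewrite /ln1B_rem.
(* [is_derive_eq] computes the derivative by instance resolution, using [d_ln] from the context. *)
by apply: is_derive_eq; rewrite /GRing.scale /=; field; lra.
Qed.

Lemma ln1B_rem_sub_half_sqr_le (x y : R) : x <= y -> y < 1 ->
  ln1B_rem x - x ^+ 2 / 2 <= ln1B_rem y - y ^+ 2 / 2.
Proof.
move=> le_xy y_lt1.
apply: (@is_derive_ge0_le (fun z => ln1B_rem z - z ^+ 2 / 2)
  (fun z => z ^+ 2 / (1 - z)) (x - 1) 1 x y _ _ _ le_xy y_lt1); last by lra.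
- move=> z /andP[_ z_lt1]; have d_rem := is_derive_ln1B_rem z_lt1.
  by apply: is_derive_eq; rewrite /GRing.scale /=; field; lra.
- by move=> z /andP[_ z_lt1]; rewrite divr_ge0 ?sqr_ge0 // subr_ge0 ltW.
Qed.

Lemma ln1B_rem_le_half_sqr (x : R) : x <= 0 -> ln1B_rem x <= x ^+ 2 / 2.
Proof.
move=> x_le0; have := ln1B_rem_sub_half_sqr_le x_le0 ltr01.
by rewrite ln1B_rem0; lra.
Qed.

Lemma half_sqr_le_ln1B_rem (x : R) : 0 <= x -> x < 1 -> x ^+ 2 / 2 <= ln1B_rem x.
Proof.
move=> x_ge0 x_lt1; have := ln1B_rem_sub_half_sqr_le x_ge0 x_lt1.
by rewrite ln1B_rem0; lra.
Qed.

Lemma ln1B_rem_ge0 (x : R) : x < 1 -> 0 <= ln1B_rem x.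
Proof.
move=> x_lt1; rewrite /ln1B_rem subr_ge0 lerNr.
by apply: le_ln1Dx; rewrite ltrNl opprK.
Qed.

Lemma ln1B_rem_mul1B_le (x : R) : 0 <= x -> x < 1 ->
  2 * (1 - x) * ln1B_rem x <= x ^+ 2.
Proof.
move=> x_ge0 x_lt1; rewrite -subr_ge0.
have -> : 0 = 0 ^+ 2 - 2 * (1 - 0) * ln1B_rem 0 :> R by rewrite ln1B_rem0; lra.
apply: (@is_derive_ge0_le (fun z => z ^+ 2 - 2 * (1 - z) * ln1B_rem z)
  (fun z => 2 * ln1B_rem z) (-1) 1 0 x _ _ _ x_ge0 x_lt1); last by lra.
- move=> z /andP[_ z_lt1]; have d_rem := is_derive_ln1B_rem z_lt1.
  by apply: is_derive_eq; rewrite /GRing.scale /=; field; lra.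
- by move=> z /andP[_ z_lt1]; rewrite mulr_ge0 ?ln1B_rem_ge0.
Qed.

Lemma ln1B_rem_div_sqr_le (x y : R) : 0 < x -> x <= y -> y < 1 ->
  ln1B_rem x / x ^+ 2 <= ln1B_rem y / y ^+ 2.
Proof.
move=> x_gt0 le_xy y_lt1.
apply: (@is_derive_ge0_le (fun z => ln1B_rem z / z ^+ 2)
  (fun z => (z ^+ 2 - 2 * (1 - z) * ln1B_rem z) / ((1 - z) * z ^+ 3))
  0 1 x y _ _ x_gt0 le_xy y_lt1).
- move=> z /andP[z_gt0 z_lt1]; have d_rem := is_derive_ln1B_rem z_lt1.
  have z2_neq0 : z ^+ 2 != 0 by rewrite expf_neq0 // gt_eqF.
  have d_sqr : is_derive z 1 (fun y : R => y ^+ 2) (2 * z).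
    by apply: is_derive_eq; rewrite /GRing.scale /=; ring.
  have d_inv := @is_deriveV _ (fun y => y ^+ 2) z _ 1 z2_neq0 d_sqr.
  apply: is_derive_eq; rewrite /GRing.scale /=.
  by field; rewrite gt_eqF //=; lra.
- move=> z /andP[z_gt0 z_lt1]; apply: divr_ge0.
    by rewrite subr_ge0 ln1B_rem_mul1B_le // ltW.
  by rewrite mulr_ge0 ?exprn_ge0 ?subr_ge0 // ltW.
Qed.

Lemma ln1B_rem_le_sqr (x g : R) : 0 < g < 1 -> x <= g ->
  ln1B_rem x <= ln1B_rem g / g ^+ 2 * x ^+ 2.
Proof.
move=> /andP[g_gt0 g_lt1] le_xg.
have half_le : 2^-1 <= ln1B_rem g / g ^+ 2.
  rewrite ler_pdivlMr ?exprn_gt0 //.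
  by have := half_sqr_le_ln1B_rem (ltW g_gt0) g_lt1; lra.
have [x_le0 | x_gt0] := leP x 0.
  have := ln1B_rem_le_half_sqr x_le0.
  have := ler_wpM2r (sqr_ge0 x) half_le; lra.
have := ln1B_rem_div_sqr_le x_gt0 le_xg g_lt1.
by rewrite ler_pdivrMr ?exprn_gt0.
Qed.

Lemma neg_ln1B_le (x g : R) : 0 < g < 1 -> x <= g ->
  - ln (1 - x) <= x + Cgamma g * x ^+ 2.
Proof.
move=> g01 le_xg; have := ln1B_rem_le_sqr g01 le_xg.
have -> : Cgamma g = ln1B_rem g / g ^+ 2.
  case/andP: g01 => _ g_lt1.
  rewrite /Cgamma /ln1B_rem ln_div ?posrE ?expR_gt0 ?subr_gt0 // expRK.
  ring.
by rewrite /ln1B_rem; lra.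
Qed.

End ln1B_remainder.

Lemma relent_scale (R : realType) (N : nat) (u w : 'rV[R]_N) (r : 'I_N -> R) :
  (forall i, 0 <= u ord0 i) -> (forall i, 0 < w ord0 i) -> (forall i, 0 < r i) ->
  relent u (\row_i (w ord0 i * r i)) - relent u w
    = \sum_(i < N | u ord0 i != 0) u ord0 i * - ln (r i).
Proof.
move=> u_ge0 w_gt0 r_gt0; rewrite /relent -sumrB; apply: eq_bigr => i u_neq0.
have u_gt0 : 0 < u ord0 i by rewrite lt_def u_neq0 u_ge0.
rewrite mxE !ln_div ?lnM ?posrE ?mulr_gt0 //; ring.
Qed.

Theorem theoremA1 (R : realType) (N : nat) (f : 'rV[R]_N -> R)
  (w : 'rV[R]_N) (M gamma : R) (u : 'rV[R]_N) :
  (forall x : 'rV[R]_N, differentiable f x) ->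
  simplex w -> (forall i, 0 < w ord0 i) ->
  (* M = max_i (Pi^t grad f^t)_i *)
  (forall i, projgrad f w ord0 i <= M) ->
  (exists i, projgrad f w ord0 i = M) ->
  0 < M ->
  0 < gamma < 1 ->
  simplex u ->
  let eta := gamma * M^-1 in
  let w' : 'rV[R]_N :=
    \row_i (w ord0 i - eta * (w ord0 i * projgrad f w ord0 i)) in
  relent u w' - relent u w <=
    eta * (\sum_(i < N) u ord0 i * projgrad f w ord0 i)
    + Cgamma gamma * eta ^+ 2 *
        (\sum_(i < N) u ord0 i * (projgrad f w ord0 i) ^+ 2).
Proof.
move=> _ _ w_gt0 le_M _ M_gt0 gamma01 [_ u_ge0]; cbv zeta.
set g := projgrad f w; set eta := gamma / M; pose x i := eta * g ord0 i.
have x_le i : x i <= gamma.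
  have eta_ge0 : 0 <= eta by rewrite mulr_ge0 ?invr_ge0 ?ltW //; case/andP: gamma01.
  by have := ler_wpM2l eta_ge0 (le_M i); rewrite mulfVK ?gt_eqF.
have -> : \row_i (w ord0 i - eta * (w ord0 i * g ord0 i)) = \row_i (w ord0 i * (1 - x i)).
  by apply/rowP => i; rewrite [LHS]mxE [RHS]mxE /x; ring.
rewrite relent_scale // => [|i]; last by have := x_le i; case/andP: gamma01; lra.
have -> : eta * (\sum_(i < N) u ord0 i * g ord0 i)
    + Cgamma gamma * eta ^+ 2 * (\sum_(i < N) u ord0 i * g ord0 i ^+ 2)
    = \sum_(i < N | u ord0 i != 0) u ord0 i * (x i + Cgamma gamma * x i ^+ 2).
  rewrite [RHS]big_mkcond !mulr_sumr -big_split; apply: eq_bigr => i _ /=.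
  by case: eqP => [->|_]; rewrite /x; ring.
apply: ler_sum => i _; apply: ler_wpM2l; first exact: u_ge0.
exact: neg_ln1B_le.
Qed.
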